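(* Let $\mathcal O$ be the suboperad of $\mathrm{CNCB}$ generated by $p:=T_{bbu}$ and $s:=T_{ubb}$. Then $\mathcal O$ admits the presentation with generators $p,s$ of arity $2$ and the single relation $$s\circ_1 p=p\circ_2 s.$$ That is, $\mathcal O$ is isomorphic, via the morphism sending the generators to $p$ and $s$, to the quotient of the free operad on two binary generators by the operadic congruence generated by this relation.
   Context: For $n\ge2$, a bicoloured noncrossing configuration (BNC) of size $n$ is a regular polygon with vertices $1,\dots,n+1$ clockwise, together with disjoint sets of blue and red arcs among the arcs $(i,j)$, $1\le i<j\le n+1$. The arcs $(i,i+1)$ are the edges ($i$th edge), $(1,n+1)$ is the base, and the others are diagonals. Coloured arcs are pairwise noncrossing ($(i,j),(k,l)$ cross iff $i<k<j<l$ or $k<i<l<j$), and red arcs are diagonals. There is one BNC of size $1$, a blue segment, which is the unit. The operad $\mathrm{CNCB}$ has the BNCs as elements (arity = size). Its composition $\mathfrak C\circ_i\mathfrak D$ ($\mathfrak C$ of size $n$, $\mathfrak D$ of size $m$) glues the base of $\mathfrak D$ on the $i$th edge of $\mathfrak C$. Arcs $(a,b)$ of $\mathfrak C$ become $(\sigma(a),\sigma(b))$ with $\sigma(v)=v$ for $v\le i$ and $v+m-1$ otherwise, and arcs $(a,b)$ of $\mathfrak D$ become $(a+i-1,b+i-1)$, keeping colours. The exception is the arc $(i,i+m)$, which is red if the $i$th edge of $\mathfrak C$ and the base of $\mathfrak D$ are both uncoloured, blue if both are blue, and uncoloured otherwise. For $x,y,z\in\{b,u\}$, $T_{xyz}$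 denotes the BNC of size $2$ (a triangle with vertices $1,2,3$) whose first edge $(1,2)$ has colour $x$, whose base $(1,3)$ has colour $y$, and whose second edge $(2,3)$ has colour $z$, where $b$ = blue and $u$ = uncoloured. The suboperad generated by a set is the smallest suboperad containing it. *)

From HB Require Import structures.
From mathcomp Require Import all_boot finmap.
Set Implicit Arguments. Unset Strict Implicit. Unset Printing Implicit Defensive.
Local Open Scope fset_scope.

(* A BNC of size n: vertices 1..n+1, arcs (i,j) with 1 <= i < j <= n+1,
   the set of blue arcs and the set of red arcs.  Finite sets from finmap
   have Leibniz equality = extensional equality, so equality of records is
   equality of configurations. *)
Record bnc := BNC { bsize : nat; bblue : {fset (nat * nat)}; bred : {fset (nat * nat)} }.

Definition is_arc (n : nat) (a : nat * nat) : bool := [&& 1 <= a.1, a.1 < a.2 & a.2 <= n.+1].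
Definition is_diag (n : nat) (a : nat * nat) : bool :=
  [&& is_arc n a, a.2 != a.1.+1 & a != (1, n.+1)].
Definition crossing (a b : nat * nat) : bool :=
  ((a.1 < b.1) && (b.1 < a.2) && (a.2 < b.2)) || ((b.1 < a.1) && (a.1 < b.2) && (b.2 < a.2)).

Definition is_bnc (C : bnc) : Prop :=
  0 < bsize C /\
  (forall a, a \in bblue C -> is_arc (bsize C) a) /\
  (forall a, a \in bred C -> is_diag (bsize C) a) /\
  (forall a, a \in bblue C -> a \notin bred C) /\
  (forall a b, a \in bblue C `|` bred C -> b \in bblue C `|` bred C -> ~~ crossing a b) /\
  (bsize C = 1 -> bblue C = [fset (1, 2)] /\ bred C = fset0).

Definition bnc_unit : bnc := BNC 1 [fset (1, 2)] fset0.

(* T_xyz : first edge (1,2) colour x, base (1,3) colour y, second edge (2,3) colour z. *)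
Definition T_bbu : bnc := BNC 2 [fset (1, 2); (1, 3)] fset0.
Definition T_ubb : bnc := BNC 2 [fset (1, 3); (2, 3)] fset0.

Definition sigma_shift (i m v : nat) : nat := if (v <= i)%N then v else (v + m - 1)%N.

Definition bnc_comp (C : bnc) (i : nat) (D : bnc) : bnc :=
  let m := bsize D in
  let eC := (i, i.+1) in
  let bD := (1, m.+1) in
  let new := (i, (i + m)%N) in
  let mapC (x : nat * nat) := (sigma_shift i m x.1, sigma_shift i m x.2) in
  let mapD (x : nat * nat) := ((x.1 + i - 1)%N, (x.2 + i - 1)%N) in
  let cblue := eC \in bblue C in
  let dblue := bD \in bblue D in
  BNC (bsize C + m - 1)%N
    ([fset mapC x | x in [fset y in bblue C | y != eC]]
       `|` [fset mapD x | x in [fset y in bblue D | y != bD]]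
       `|` (if cblue && dblue then [fset new] else fset0))
    ([fset mapC x | x in [fset y in bred C | y != eC]]
       `|` [fset mapD x | x in [fset y in bred D | y != bD]]
       `|` (if ~~ cblue && ~~ dblue then [fset new] else fset0)).

Inductive gen_subop (G : bnc -> Prop) : bnc -> Prop :=
  | gs_unit : gen_subop G bnc_unit
  | gs_gen : forall x, G x -> gen_subop G x
  | gs_comp : forall x y i, gen_subop G x -> gen_subop G y ->
      1 <= i <= bsize x -> gen_subop G (bnc_comp x i y).

Definition gens_ps (x : bnc) : Prop := x = T_bbu \/ x = T_ubb.

Inductive gen2 := Gp | Gs.

Inductive tree := Leaf | Node of gen2 & tree & tree.

Fixpoint arity (t : tree) : nat :=
  match t with Leaf => 1 | Node _ l r => (arity l + arity r)%N end.

(* graft t i u : partial composition t o_i u in the free operad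
   (substitution of u for the i-th leaf, 1-based). *)
Fixpoint graft (t : tree) (i : nat) (u : tree) : tree :=
  match t with
  | Leaf => if i == 1 then u else Leaf
  | Node g l r => if i <= arity l then Node g (graft l i u) r
                  else Node g l (graft r (i - arity l)%N u)
  end.

Definition tp : tree := Node Gp Leaf Leaf.
Definition ts : tree := Node Gs Leaf Leaf.

Inductive cong : tree -> tree -> Prop :=
  | cong_rel : cong (graft ts 1 tp) (graft tp 2 ts)
  | cong_refl : forall t, cong t t
  | cong_sym : forall t u, cong t u -> cong u t
  | cong_trans : forall t u v, cong t u -> cong u v -> cong t v
  | cong_comp : forall t t' u u' i, 1 <= i <= arity t ->
      cong t t' -> cong u u' -> cong (graft t i u) (graft t' i u').

(* The operad morphism from the free operad to CNCB sending the generators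
   to p = T_bbu and s = T_ubb; Node g l r = g(l, r) = (g o_2 r) o_1 l. *)
Definition gen_val (g : gen2) : bnc := if g is Gp then T_bbu else T_ubb.

Fixpoint ev (t : tree) : bnc :=
  match t with
  | Leaf => bnc_unit
  | Node g l r => bnc_comp (bnc_comp (gen_val g) 2 (ev r)) 1 (ev l)
  end.

From mathcomp Require Import all_boot finmap zify.

(* Evaluate a tree [t] of the free operad by reading off its arcs: a [p]-node whose
   leaves occupy the vertices [a..c], split at [b], contributes the arc [(a, b)], an
   [s]-node contributes [(b, c)]; [ev t] is the configuration with no red arc whose
   blue arcs are the base and these node arcs.  The description is stable under
   grafting, because the arc that composition creates on the grafting edge is the
   image of that edge under the renumbering.  This makes [ev] a morphism and shows
   that its image is the suboperad generated by [p] and [s].  Both sides of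
   [s o_1 p = p o_2 s] have the arcs [(1, 2)] and [(3, 4)].  Conversely, rewriting
   [s(p(x, y), z)] into [p(x, s(y, z))] brings every tree to a normal form without
   an [s]-node whose left child is a [p]-node, and a normal tree is determined by its
   arcs: its root is a [p]-node iff an arc starts at the leftmost vertex, and then
   the longest such arc splits the leaves between the subtrees; otherwise the
   shortest arc ending at the rightmost vertex does. *)

Set Implicit Arguments.
Unset Strict Implicit.
Unset Printing Implicit Defensive.
Set Bullet Behavior "Strict Subproofs".

(* [tree_arc t o x y]: [(x, y)] is the arc of a node of [t], the leftmost leaf of [t]
   being the edge [(o, o + 1)]. *)
Fixpoint tree_arc (t : tree) (o x y : nat) : Prop :=
  match t with
  | Leaf => False
  | Node g l r =>
     (if g is Gp then x = o /\ y = (o + arity l)%N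
      else x = (o + arity l)%N /\ y = (o + arity l + arity r)%N)
     \/ tree_arc l o x y \/ tree_arc r (o + arity l) x y
  end.

Lemma arity_gt0 t : 0 < arity t.
Proof. elim: t => //= g l IHl r IHr; lia. Qed.

Lemma arity_graft t i u : 1 <= i <= arity t ->
  arity (graft t i u) = (arity t + arity u - 1)%N.
Proof.
elim: t i => /= [|g l IHl r IHr] i Hi; first by rewrite (_ : i = 1) /=; lia.
have := arity_gt0 l; have := arity_gt0 r; have := arity_gt0 u.
by case: (leqP i (arity l)) => Hil /=; [rewrite IHl | rewrite IHr]; lia.
Qed.

Lemma tree_arc_range t o x y : tree_arc t o x y ->
  o <= x /\ x < y /\ y <= o + arity t /\ y < x + arity t.
Proof.
elim: t o => //= g l IHl r IHr o.
have := arity_gt0 l; have := arity_gt0 r.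
by case: g => /= ? ?; case=> [[-> ->]|[/IHl|/IHr]]; lia.
Qed.

Lemma tree_arc_shift t o k x y :
  tree_arc t (o + k) (x + k) (y + k) <-> tree_arc t o x y.
Proof.
elim: t o => //= g l IHl r IHr o.
rewrite (_ : o + k + arity l = (o + arity l) + k)%N; last lia.
by rewrite IHl IHr; case: g; split; case=> [?|?]; (left; lia) || right.
Qed.

Lemma tree_arc_shiftP t o k x y : tree_arc t (o + k) x y <->
  exists x' y', [/\ x = (x' + k)%N, y = (y' + k)%N & tree_arc t o x' y'].
Proof.
split=> [H|[x' [y' [-> -> /tree_arc_shift //]]]].
have [? [? [? ?]]] := tree_arc_range H.
exists (x - k)%N, (y - k)%N; split; try lia.
by rewrite -(tree_arc_shift _ _ k) !subnK //; lia.
Qed.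

Lemma sigma_shift_le k m v : v <= k -> sigma_shift k m v = v.
Proof. by rewrite /sigma_shift => ->. Qed.

Lemma sigma_shift_gt k m v : k < v -> sigma_shift k m v = (v + m - 1)%N.
Proof. by move=> H; rewrite /sigma_shift leqNgt H. Qed.

Section GraftArcs.

Variables (u : tree) (x y : nat).

Local Notation grafted_arc t i o :=
  ((exists x' y', [/\ tree_arc t o x' y', x = sigma_shift (o + i - 1) (arity u) x'
                     & y = sigma_shift (o + i - 1) (arity u) y'])
   \/ tree_arc u (o + i - 1) x y).

Lemma graft_tree_arc_left g l r i o : 1 <= i <= arity l ->
  (tree_arc (graft l i u) o x y <-> grafted_arc l i o) ->
  tree_arc (Node g (graft l i u) r) o x y <-> grafted_arc (Node g l r) i o.
Proof.
move=> Hi IH; rewrite /= (arity_graft _ Hi) IH.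
have l_gt0 := arity_gt0 l; have r_gt0 := arity_gt0 r; have m_gt0 := arity_gt0 u.
set k := (o + i - 1)%N; set m := arity u.
rewrite (_ : o + (arity l + m - 1) = (o + arity l) + (m - 1))%N; last lia.
split.
- case=> [root|[[[x' [y' [arc -> ->]]]|arc]|/tree_arc_shiftP[x' [y' [-> -> arc]]]]].
  + left; case: g root => [] [-> ->].
      by exists o, (o + arity l)%N; rewrite sigma_shift_le ?sigma_shift_gt; try split; lia.
    exists (o + arity l)%N, (o + arity l + arity r)%N.
    by rewrite !sigma_shift_gt; try split; lia.
  + by left; exists x', y'; split=> //; right; left.
  + by right.
  + have rng := tree_arc_range arc.
    by left; exists x', y'; split; [right; right | rewrite sigma_shift_gt; lia ..].
- case=> [[x' [y' [[root|[arc|arc]] -> ->]]]|arc].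
  + left; case: g root => [] [-> ->].
      by rewrite sigma_shift_le ?sigma_shift_gt; lia.
    by rewrite !sigma_shift_gt; lia.
  + by right; left; left; exists x', y'.
  + have rng := tree_arc_range arc.
    right; right; apply/tree_arc_shiftP.
    by exists x', y'; split; rewrite ?sigma_shift_gt //; lia.
  + by right; left; right.
Qed.

Lemma graft_tree_arc_right g l r i o : 1 <= i - arity l <= arity r ->
  (tree_arc (graft r (i - arity l) u) (o + arity l) x y <->
     grafted_arc r (i - arity l) (o + arity l)) ->
  tree_arc (Node g l (graft r (i - arity l) u)) o x y <-> grafted_arc (Node g l r) i o.
Proof.
move=> Hi IH; rewrite /= (arity_graft _ Hi) IH.
have l_gt0 := arity_gt0 l; have r_gt0 := arity_gt0 r.
set k := (o + i - 1)%N; set m := arity u.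
rewrite (_ : o + arity l + (i - arity l) - 1 = k)%N; last lia.
split.
- case=> [root|[arc|[[x' [y' [arc -> ->]]]|arc]]].
  + left; case: g root => [] [-> ->].
      by exists o, (o + arity l)%N; rewrite !sigma_shift_le; try split; lia.
    exists (o + arity l)%N, (o + arity l + arity r)%N.
    by rewrite sigma_shift_le ?sigma_shift_gt; try split; lia.
  + have rng := tree_arc_range arc.
    by left; exists x, y; split; [right; left | rewrite sigma_shift_le; lia ..].
  + by left; exists x', y'; split=> //; right; right.
  + by right.
- case=> [[x' [y' [[root|[arc|arc]] -> ->]]]|arc].
  + left; case: g root => [] [-> ->].
      by rewrite !sigma_shift_le; lia.
    by rewrite sigma_shift_le ?sigma_shift_gt; lia.
  + have rng := tree_arc_range arc.
    by right; left; rewrite !sigma_shift_le //; lia.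
  + by right; right; left; exists x', y'.
  + by right; right; right.
Qed.

Lemma graft_tree_arc t i o : 1 <= i <= arity t ->
  tree_arc (graft t i u) o x y <-> grafted_arc t i o.
Proof.
elim: t i o => [|g l IHl r IHr] i o Hi.
  rewrite (_ : i = 1) /= ?addnK; last by move: Hi => /=; lia.
  by split=> [?|[[? [? [[]]]]|//]]; right.
move: Hi => /= Hi; rewrite [graft _ _ _]/=.
case: (leqP i (arity l)) => Hil.
- have Hil' : 1 <= i <= arity l by lia.
  exact: graft_tree_arc_left Hil' (IHl _ _ Hil').
- have Hir : 1 <= i - arity l <= arity r by lia.
  exact: graft_tree_arc_right Hir (IHr _ _ Hir).
Qed.

End GraftArcs.

Local Open Scope fset_scope.

Lemma sigma_shift_edge i m :
  (sigma_shift i m i, sigma_shift i m i.+1) = (i, (i + m)%N).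
Proof. by rewrite sigma_shift_le // sigma_shift_gt //; congr pair; lia. Qed.

(* Once the base of [D] is blue, the arc created on the grafting edge is the image
   of that edge, so every blue arc of [C] is simply renumbered. *)
Lemma bnc_comp_blue C i D a : (1, (bsize D).+1) \in bblue D ->
  a \in bblue (bnc_comp C i D) <->
  (exists2 b, b \in bblue C &
     a = (sigma_shift i (bsize D) b.1, sigma_shift i (bsize D) b.2)) \/
  (exists2 b, b \in bblue D & b != (1, (bsize D).+1) /\ a = ((b.1 + i - 1)%N, (b.2 + i - 1)%N)).
Proof.
move=> baseD; rewrite /bnc_comp /= baseD andbT !inE; split.
- case/orP=> [/orP[]|].
  + by case/imfsetP=> b /=; rewrite !inE => /andP[Hb _] ->; left; exists b.
  + by case/imfsetP=> b /=; rewrite !inE => /andP[Hb nb] ->; right; exists b.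
  + case: ifP => [edgeC|]; last by rewrite inE.
    by rewrite inE => /eqP ->; left; exists (i, i.+1); rewrite ?sigma_shift_edge.
- case=> [[b Hb ->]|[b Hb [nb ->]]].
  + case: (eqVneq b (i, i.+1)) Hb => [-> Hb|nb Hb].
      by rewrite /= Hb sigma_shift_edge inE eqxx !orbT.
    by apply/orP; left; apply/orP; left; apply/imfsetP; exists b; rewrite //= !inE Hb nb.
  + by apply/orP; left; apply/orP; right; apply/imfsetP; exists b; rewrite //= !inE Hb nb.
Qed.

Lemma bnc_comp_red C i D : (1, (bsize D).+1) \in bblue D ->
  bred C = fset0 -> bred D = fset0 -> bred (bnc_comp C i D) = fset0.
Proof.
move=> baseD redC redD; rewrite /bnc_comp /= redC redD baseD andbF.
by apply/fsetP=> a; rewrite !inE orbF; apply/negbTE/negP => /orP[] /imfsetP[b /=]; rewrite !inE.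
Qed.

Local Close Scope fset_scope.

Record encodes (C : bnc) (t : tree) : Prop := Encodes {
  encodes_size : bsize C = arity t;
  encodes_red : bred C = fset0;
  encodes_blue : forall x y,
    (x, y) \in bblue C <-> (x = 1 /\ y = (arity t).+1) \/ tree_arc t 1 x y }.

Lemma encodes_base C t : encodes C t -> (1, (bsize C).+1) \in bblue C.
Proof. by case=> size_C _ blue_C; apply/blue_C; left; rewrite size_C. Qed.

Lemma encodes_blue_shift C t k m x y : 1 <= k <= arity t -> encodes C t ->
  (exists2 b, b \in bblue C & (x, y) = (sigma_shift k m b.1, sigma_shift k m b.2)) <->
  (x = 1 /\ y = (arity t + m)%N) \/
  exists x' y', [/\ tree_arc t 1 x' y', x = sigma_shift k m x' & y = sigma_shift k m y'].
Proof.
move=> Hk [_ _ blue_C].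
have sh_base : (sigma_shift k m 1, sigma_shift k m (arity t).+1) = (1, (arity t + m)%N).
  by rewrite sigma_shift_le ?sigma_shift_gt; try congr pair; lia.
split=> [[[x' y'] /blue_C Hb [-> ->]]|[[-> ->]|[x' [y' [arc -> ->]]]]].
- by case: Hb => [[-> ->]|arc]; [left; case: sh_base | right; exists x', y'].
- by exists (1, (arity t).+1); [apply/blue_C; left | rewrite sh_base].
- by exists (x', y'); first by apply/blue_C; right.
Qed.

Lemma encodes_blue_offset D u i x y : 1 <= i -> encodes D u ->
  (exists2 b, b \in bblue D &
     b != (1, (bsize D).+1) /\ (x, y) = ((b.1 + i - 1)%N, (b.2 + i - 1)%N)) <->
  tree_arc u i x y.
Proof.
move=> Hi [size_D _ blue_D]; rewrite size_D.
transitivity (tree_arc u (1 + (i - 1)) x y); last by rewrite subnKC.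
rewrite tree_arc_shiftP.
split=> [[[x' y'] /blue_D Hb [nb [-> ->]]]|[x' [y' [-> -> arc]]]].
- case: Hb => [[Ex Ey]|arc]; first by rewrite Ex Ey eqxx in nb.
  by exists x', y'; split=> //; lia.
- have := tree_arc_range arc => rng.
  exists (x', y'); first by apply/blue_D; right.
  by split; [apply/eqP; case | congr pair] => /=; lia.
Qed.

Lemma encodes_comp C D t u i : 1 <= i <= arity t -> encodes C t -> encodes D u ->
  encodes (bnc_comp C i D) (graft t i u).
Proof.
move=> Hi encC encD; have [size_C red_C _] := encC; have [size_D red_D _] := encD.
have u_gt0 := arity_gt0 u.
split; first by rewrite /= (arity_graft _ Hi) size_C size_D.
  exact: bnc_comp_red (encodes_base encD) red_C red_D.
move=> x y; rewrite bnc_comp_blue; last exact: encodes_base encD.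
rewrite (arity_graft _ Hi) (encodes_blue_offset _ _ _ encD); last by case/andP: Hi.
rewrite size_D (encodes_blue_shift _ _ _ Hi encC) graft_tree_arc //.
have -> : (1 + i - 1 = i)%N by lia.
have -> : ((arity t + arity u - 1).+1 = arity t + arity u)%N by lia.
by rewrite or_assoc.
Qed.

Lemma encodes_unit : encodes bnc_unit Leaf.
Proof.
by split=> // x y; rewrite inE; split=> [/eqP[-> ->]|[[-> ->]|[]]]; first left.
Qed.

Lemma encodes_gen g : encodes (gen_val g) (Node g Leaf Leaf).
Proof.
split; [by case: g | by case: g |] => x y.
by case: g; rewrite !inE; split=> [/orP[] /eqP[-> ->]|[[-> ->]|[[-> ->]|[]//]]];
  rewrite /=; by [| left | right; left].
Qed.

Lemma encodes_ev t : encodes (ev t) t.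
Proof.
elim: t => [|g l IHl r IHr]; first exact: encodes_unit.
have enc_gr := encodes_comp (i := 2) (t := Node g Leaf Leaf) isT (encodes_gen g) IHr.
by apply: encodes_comp enc_gr IHl; rewrite /= addn_gt0 arity_gt0.
Qed.

Lemma encodes_uniq C D t : encodes C t -> encodes D t -> C = D.
Proof.
case: C D => [n b r] [n' b' r'] [/= -> -> blue] [/= -> -> blue'].
congr BNC; apply/fsetP=> [[x y]].
by apply/idP/idP => H; [apply/blue'/blue | apply/blue/blue'].
Qed.

Lemma ev_graft t i u : 1 <= i <= arity t -> ev (graft t i u) = bnc_comp (ev t) i (ev u).
Proof.
move=> Hi; apply: (encodes_uniq (encodes_ev _)).
exact: encodes_comp Hi (encodes_ev t) (encodes_ev u).
Qed.

Lemma ev_size t : bsize (ev t) = arity t.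
Proof. exact: encodes_size (encodes_ev t). Qed.

Lemma ev_eq_arcs t1 t2 : ev t1 = ev t2 <->
  arity t1 = arity t2 /\ forall x y, tree_arc t1 1 x y <-> tree_arc t2 1 x y.
Proof.
have [_ _ blue1] := encodes_ev t1; have [_ _ blue2] := encodes_ev t2.
split=> [E|[Ea Earc]].
- have Ea : arity t1 = arity t2 by rewrite -!ev_size E.
  split=> // x y; rewrite E in blue1.
  split=> arc; have rng := tree_arc_range arc.
  + have /blue2[[Ex Ey]|//] : (x, y) \in bblue (ev t2) by apply/blue1; right.
    lia.
  + have /blue1[[Ex Ey]|//] : (x, y) \in bblue (ev t2) by apply/blue2; right.
    lia.
- apply: (encodes_uniq (encodes_ev t1)).
  split=> [|| x y]; first by rewrite ev_size.
    exact: encodes_red (encodes_ev t2).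
  by rewrite blue2 Ea Earc.
Qed.

Definition p_rooted (t : tree) : bool := if t is Node Gp _ _ then true else false.

Fixpoint normal (t : tree) : bool :=
  match t with
  | Leaf => true
  | Node Gp l r => normal l && normal r
  | Node Gs l r => [&& ~~ p_rooted l, normal l & normal r]
  end.

Lemma normal_node g l r : normal (Node g l r) -> normal l && normal r.
Proof. by case: g => /= [|/and3P[]] // _ -> ->. Qed.

Lemma normal_left_arc_p_rooted t o y : normal t -> tree_arc t o o y -> p_rooted t.
Proof.
elim: t o => //= -[] // l IHl r IHr o /and3P[not_pl nl _].
have l_gt0 := arity_gt0 l.
by case=> [[]|[/(IHl _ nl)|/tree_arc_range]]; [lia | rewrite (negbTE not_pl) | lia].
Qed.

Lemma tree_arc_p_root_bound l r o y : tree_arc (Node Gp l r) o o y -> y <= o + arity l.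
Proof.
have l_gt0 := arity_gt0 l.
by case=> [[_ ->]|[/tree_arc_range|/tree_arc_range]]; lia.
Qed.

Lemma tree_arc_s_root_bound l r o x :
  tree_arc (Node Gs l r) o x (o + arity l + arity r) -> o + arity l <= x.
Proof.
have r_gt0 := arity_gt0 r.
by case=> [[-> _]|[/tree_arc_range|/tree_arc_range]]; lia.
Qed.

Lemma tree_arc_left g l r o x y : tree_arc l o x y <->
  tree_arc (Node g l r) o x y /\ y <= o + arity l /\ ~ (x = o /\ y = o + arity l).
Proof.
have l_gt0 := arity_gt0 l; have r_gt0 := arity_gt0 r.
split=> [arc|[[root|[//|/tree_arc_range]] ?]]; try lia.
- by have := tree_arc_range arc; split; [right; left | lia].
- by case: g root; lia.
Qed.

Lemma tree_arc_right g l r o x y : tree_arc r (o + arity l) x y <->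
  tree_arc (Node g l r) o x y /\ o + arity l <= x /\
  ~ (x = o + arity l /\ y = o + arity l + arity r).
Proof.
have l_gt0 := arity_gt0 l; have r_gt0 := arity_gt0 r.
split=> [arc|[[root|[/tree_arc_range|//]] ?]]; try lia.
- by have := tree_arc_range arc; split; [right; right | lia].
- by case: g root; lia.
Qed.

Section NormalRoot.

Variables (g1 g2 : gen2) (l1 r1 l2 r2 : tree) (o : nat).
Hypotheses (n1 : normal (Node g1 l1 r1)) (n2 : normal (Node g2 l2 r2)).
Hypothesis same_arity : arity l1 + arity r1 = arity l2 + arity r2.
Hypothesis same_arcs : forall x y,
  tree_arc (Node g1 l1 r1) o x y <-> tree_arc (Node g2 l2 r2) o x y.

Lemma normal_root_gen : g1 = g2.
Proof.
have p_root g l r y : normal (Node g l r) -> tree_arc (Node g l r) o o y -> g = Gp.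
  by move=> n /(normal_left_arc_p_rooted n); case: g {n}.
case: g1 g2 same_arcs n1 n2 p_root => [] [] // arcs n1' n2' p_root.
- by apply/esym/(p_root _ _ _ (o + arity l1) n2')/arcs; left.
- by apply/(p_root _ _ _ (o + arity l2) n1')/arcs; left.
Qed.

Lemma normal_root_left_arity : arity l1 = arity l2.
Proof.
move: same_arcs; rewrite -normal_root_gen; case: g1 => arcs.
- have /arcs/tree_arc_p_root_bound : tree_arc (Node Gp l1 r1) o o (o + arity l1) by left.
  have /arcs/tree_arc_p_root_bound : tree_arc (Node Gp l2 r2) o o (o + arity l2) by left.
  lia.
- have /arcs : tree_arc (Node Gs l1 r1) o (o + arity l1) (o + arity l1 + arity r1) by left.
  rewrite -addnA same_arity addnA => /tree_arc_s_root_bound le21.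
  have /arcs : tree_arc (Node Gs l2 r2) o (o + arity l2) (o + arity l2 + arity r2) by left.
  rewrite -addnA -same_arity addnA => /tree_arc_s_root_bound le12.
  lia.
Qed.

End NormalRoot.

Lemma normal_tree_arc_inj t1 t2 o : normal t1 -> normal t2 -> arity t1 = arity t2 ->
  (forall x y, tree_arc t1 o x y <-> tree_arc t2 o x y) -> t1 = t2.
Proof.
elim: t1 t2 o => [|g1 l1 IHl r1 IHr] [|g2 l2 r2] o n1 n2 Ea arcs //.
  by move: Ea (arity_gt0 l2) (arity_gt0 r2) => /=; lia.
  by move: Ea (arity_gt0 l1) (arity_gt0 r1) => /=; lia.
have gE := normal_root_gen n1 n2 arcs.
have lE := normal_root_left_arity n1 n2 Ea arcs.
have rE : arity r1 = arity r2 by move: Ea => /=; lia.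
subst g2; case/andP: (normal_node n1) => nl1 nr1; case/andP: (normal_node n2) => nl2 nr2.
congr Node.
- apply: (IHl _ o) => // x y.
  by rewrite (tree_arc_left g1 l1 r1) (tree_arc_left g1 l2 r2) arcs lE.
- apply: (IHr _ (o + arity l1)) => // x y.
  by rewrite (tree_arc_right g1 l1 r1) arcs lE rE (tree_arc_right g1 l2 r2).
Qed.

Fixpoint rotate_s (l r : tree) : tree :=
  if l is Node Gp x y then Node Gp x (rotate_s y r) else Node Gs l r.

Fixpoint normalize (t : tree) : tree :=
  match t with
  | Leaf => Leaf
  | Node Gp l r => Node Gp (normalize l) (normalize r)
  | Node Gs l r => rotate_s (normalize l) (normalize r)
  end.

Lemma normal_rotate_s l r : normal l -> normal r -> normal (rotate_s l r).
Proof.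
elim: l => [|[] x _ y IHy] //= nl nr; last by rewrite nl nr.
by case/andP: nl => -> /IHy ->.
Qed.

Lemma normal_normalize t : normal (normalize t).
Proof.
by elim: t => [|[] l IHl r IHr] //=; [rewrite IHl IHr | exact: normal_rotate_s].
Qed.

Lemma cong_node g l l' r r' : cong l l' -> cong r r' -> cong (Node g l r) (Node g l' r').
Proof.
move=> cl cr.
apply: (@cong_comp (graft (Node g Leaf Leaf) 2 r) (graft (Node g Leaf Leaf) 2 r') l l' 1) => //.
exact: cong_comp (cong_refl _) cr.
Qed.

Lemma cong_assoc x y z : cong (Node Gs (Node Gp x y) z) (Node Gp x (Node Gs y z)).
Proof.
have rel_z := cong_comp (t := graft ts 1 tp) (i := 3) isT cong_rel (cong_refl z).
have rel_yz := cong_comp (i := 2) (t := graft (graft ts 1 tp) 3 z) isT rel_z (cong_refl y).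
exact: (cong_comp (i := 1) (t := graft (graft (graft ts 1 tp) 3 z) 2 y) isT rel_yz (cong_refl x)).
Qed.

Lemma cong_rotate_s l r : cong (Node Gs l r) (rotate_s l r).
Proof.
elim: l => [|[] x _ y IHy] /=; try exact: cong_refl.
exact: cong_trans (cong_assoc x y r) (cong_node _ (cong_refl x) IHy).
Qed.

Lemma cong_normalize t : cong t (normalize t).
Proof.
elim: t => [|[] l IHl r IHr] /=; first exact: cong_refl.
  exact: cong_node.
exact: cong_trans (cong_node _ IHl IHr) (cong_rotate_s _ _).
Qed.

Lemma ev_cong t1 t2 : cong t1 t2 -> ev t1 = ev t2.
Proof.
elim=> {t1 t2} [|//|t u _ -> //|t u v _ -> _ -> //|t t' u u' i Hi _ Et _ Eu].
  by apply/ev_eq_arcs; split=> // x y /=; lia.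
have Ea : arity t = arity t' by rewrite -!ev_size Et.
by rewrite !ev_graft -?Ea // Et Eu.
Qed.


Lemma cong_of_ev_eq t1 t2 : ev t1 = ev t2 -> cong t1 t2.
Proof.
move=> E.
have /ev_eq_arcs[Ea arcs] : ev (normalize t1) = ev (normalize t2).
  by rewrite -(ev_cong (cong_normalize t1)) -(ev_cong (cong_normalize t2)).
have nfE := normal_tree_arc_inj (normal_normalize t1) (normal_normalize t2) Ea arcs.
apply: cong_trans (cong_normalize t1) _; rewrite nfE.
exact/cong_sym/cong_normalize.
Qed.

Lemma ev_gen g : ev (Node g Leaf Leaf) = gen_val g.
Proof. exact: encodes_uniq (encodes_ev _) (encodes_gen g). Qed.

Lemma gen_subop_ev t : gen_subop gens_ps (ev t).
Proof.
elim: t => [|g l IHl r IHr] /=; first exact: gs_unit.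
have gen_g : gen_subop gens_ps (gen_val g) by apply: gs_gen; case: g; [left | right].
apply: gs_comp (gs_comp gen_g IHr _) IHl _; first by case: g {gen_g}.
by have := arity_gt0 r; rewrite /= ev_size; case: g {gen_g} => /=; lia.
Qed.

Lemma gen_subop_ev_image x : gen_subop gens_ps x -> exists t, ev t = x.
Proof.
elim=> [|y [->|->]|y z i _ [t <-] _ [u <-] Hi].
- by exists Leaf.
- by exists tp; exact: ev_gen Gp.
- by exists ts; exact: ev_gen Gs.
- by exists (graft t i u); rewrite ev_graft -?ev_size.
Qed.

Theorem theorem3p21 :
  (forall t i u, 1 <= i <= arity t -> ev (graft t i u) = bnc_comp (ev t) i (ev u)) /\
  (forall x, gen_subop gens_ps x <-> exists t, ev t = x) /\
  (forall t1 t2, ev t1 = ev t2 <-> cong t1 t2).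
Proof.
split; first exact: ev_graft.
split=> [x|t1 t2]; split.
- exact: gen_subop_ev_image.
- by case=> t <-; exact: gen_subop_ev.
- exact: cong_of_ev_eq.
- exact: ev_cong.
Qed.
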